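(* Let $\gamma\ge0$ be an integer and let $\xi=\{\xi^m\}$ with $\xi^m=K_\gamma\mathbf{1}(m=\gamma)$, $K_\gamma=\pm2\omega_\gamma\sqrt{\frac{2}{3C_{\gamma\gamma\gamma\gamma}}}$. Then the non-degeneracy condition $\ker(d\mathcal{M}(\xi))=\{0\}$ (for $d\mathcal{M}(\xi)$ acting on $l^2_{s+3}$) is equivalent to: $\omega_m^2C_{\gamma\gamma\gamma\gamma}-2\omega_\gamma^2C_{\gamma\gamma mm}\ne0$ for all $m\ge2\gamma+1$, and $D_{\gamma n}\ne0$ for all $n\in\{0,1,\dots,\gamma-1\}$, where $$D_{\gamma n}=\left[\omega_n^2C_{\gamma\gamma\gamma\gamma}-2\omega_\gamma^2C_{\gamma\gamma nn}\right]\left[\omega_{2\gamma-n}^2C_{\gamma\gamma\gamma\gamma}-2\omega_\gamma^2C_{\gamma,\gamma,2\gamma-n,2\gamma-n}\right]-\left[\omega_\gamma^2C_{\gamma,2\gamma-n,\gamma,n}\right]^2.$$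
   Context: $\omega_n=n+1$, $C_{ijkm}=\frac2\pi\int_{-1}^1U_iU_jU_kU_m\sqrt{1-y^2}\,dy$ ($U_n$ Chebyshev polynomials of the second kind). $l^2_s$: sequences with $\sum_jj^{2s}|u^j|^2<\infty$. $(A\xi)^m=\omega_m^2\xi^m$; $(f(u))^m=-\sum_{i,j,k\ge0}C_{ijkm}u^iu^ju^k$; $\Phi^t(\xi)=\{\xi^n\cos(\omega_nt)\}_n$; $\mathcal{M}(\xi)=A\xi+\frac1{2\pi}\int_0^{2\pi}\Phi^t[f(\Phi^t(\xi))]dt$. *)

From Stdlib Require Import Reals Lra.
From Coquelicot Require Import Coquelicot.
Open Scope R_scope.

Definition omega (n : nat) : R := INR n + 1.

Fixpoint U (n : nat) (y : R) : R :=
  match n with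
  | O => 1
  | S n' => match n' with
            | O => 2 * y
            | S n'' => 2 * y * U n' y - U n'' y
            end
  end.

Definition Ccoef (i j k m : nat) : R :=
  2 / PI * RInt (fun y => U i y * U j y * U k y * U m y * sqrt (1 - y ^ 2)) (-1) 1.

Definition seqR := nat -> R.

Definition l2s (s : R) (u : seqR) : Prop :=
  ex_series (fun j => Rpower (INR j) (2 * s) * (u j) ^ 2).

Definition fmap (u : seqR) (m : nat) : R :=
  - Series (fun i => Series (fun j => Series (fun k =>
        Ccoef i j k m * u i * u j * u k))).

Definition Phi (t : R) (v : seqR) : seqR := fun n => v n * cos (omega n * t).

Definition Mmap (v : seqR) (m : nat) : R :=
  (omega m) ^ 2 * v m
  + / (2 * PI) * RInt (fun t => Phi t (fmap (Phi t v)) m) 0 (2 * PI).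

Definition dM (xi eta : seqR) (m : nat) : R :=
  Derive (fun e => Mmap (fun n => xi n + e * eta n) m) 0.

Definition Dgn (g n : nat) : R :=
  ((omega n) ^ 2 * Ccoef g g g g - 2 * (omega g) ^ 2 * Ccoef g g n n)
  * ((omega (2 * g - n)) ^ 2 * Ccoef g g g g
     - 2 * (omega g) ^ 2 * Ccoef g g (2 * g - n) (2 * g - n))
  - ((omega g) ^ 2 * Ccoef g (2 * g - n) g n) ^ 2.

(* At [xi = K e_gamma] only the terms of the cubic nonlinearity containing [xi] twice
   contribute to [dM(xi)].  The selection rule [C_{n a b c} = 0] for [a + b + c < n]
   (orthogonality of [U_n] to polynomials of lower degree) and the time average of a
   product of four cosines leave in row [m] only [eta^m] and its mirror image
   [eta^(2 gamma - m)].  Hence [dM(xi)] is diagonal beyond [2 gamma], has symmetric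
   2x2 blocks on the pairs [{n, 2 gamma - n}], [n < gamma], whose determinants are the
   [D_{gamma n}], and a nonzero centre entry because [3 K^2 C_{gamma gamma gamma gamma}
   = 8 omega_gamma^2].  Such an operator has trivial kernel on sequences exactly when
   all the diagonal entries beyond [2 gamma] and all the block determinants are nonzero. *)

From Stdlib Require Import Reals Lra Lia ZArith.
From Coquelicot Require Import Coquelicot.
Open Scope R_scope.

(** * Chebyshev polynomials and the coefficients C *)

Ltac continuity_R := repeat match goal with
  | |- continuous (fun y => @?f y * @?g y) _ => apply (continuous_mult (K := R_AbsRing) f g)
  | |- continuous (fun y => @?f y + @?g y) _ => apply (continuous_plus (V := R_NormedModule) f g)
  | |- continuous (fun y => @?f y - @?g y) _ => apply (continuous_minus (V := R_NormedModule) f g)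
  | |- continuous (fun y => - @?f y) _ => apply (continuous_opp (V := R_NormedModule) f)
  | |- continuous (fun y => cos (@?f y)) _ => apply (continuous_cos_comp f)
  | |- continuous (fun y => sin (@?f y)) _ => apply (continuous_sin_comp f)
  | |- continuous (fun y => sqrt (@?f y)) _ => apply (continuous_sqrt_comp f)
  | |- continuous (fun y => ?f (cos y)) _ => apply (continuous_comp cos f); [apply continuous_cos|]
  | |- continuous (fun y => y) _ => apply continuous_id
  | |- continuous (fun _ => ?c) _ => apply continuous_const
  end.

Lemma ex_RInt_continuous_R (f : R -> R) a b : (forall x, continuous f x) -> ex_RInt f a b.
Proof. intros Hf; apply (ex_RInt_continuous (V := R_CompleteNormedModule)); auto. Qed.

(* Stated in [R], so that the pointwise side goals are equations in [R], as [ring] and [field] need. *)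
Lemma RInt_ext_R (f g : R -> R) a b :
  (forall x, Rmin a b < x < Rmax a b -> f x = g x) -> RInt f a b = RInt g a b.
Proof. apply RInt_ext. Qed.

Lemma nat_ind2 (P : nat -> Prop) :
  P 0%nat -> P 1%nat -> (forall n, P n -> P (S n) -> P (S (S n))) -> forall n, P n.
Proof.
  intros H0 H1 HS n. enough (P n /\ P (S n)) by tauto.
  induction n as [|n [IH IHS]]; auto.
Qed.

Lemma U_SS n y : U (S (S n)) y = 2 * y * U (S n) y - U n y.
Proof. reflexivity. Qed.

Lemma U_cos_mul_sin n t : sin t * U n (cos t) = sin (INR (S n) * t).
Proof.
  induction n as [| |n IH IHS] using nat_ind2.
  - simpl. rewrite Rmult_1_l, Rmult_1_r. reflexivity.
  - simpl U. replace (INR 2 * t) with (2 * t) by (simpl; ring). rewrite sin_2a. ring.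
  - rewrite U_SS.
    replace (sin t * (2 * cos t * U (S n) (cos t) - U n (cos t))) with
      (2 * cos t * (sin t * U (S n) (cos t)) - sin t * U n (cos t)) by ring.
    rewrite IH, IHS, !S_INR.
    replace ((INR n + 1 + 1 + 1) * t) with ((INR n + 1 + 1) * t + t) by ring.
    replace ((INR n + 1) * t) with ((INR n + 1 + 1) * t - t) by ring.
    rewrite sin_plus, sin_minus. ring.
Qed.

Lemma U_1 n : U n 1 = INR n + 1.
Proof.
  induction n as [| |n IH IHS] using nat_ind2; [simpl; ring | simpl; ring|].
  rewrite U_SS, IH, IHS, !S_INR. ring.
Qed.

Lemma U_m1 n : U n (-1) = (-1) ^ n * (INR n + 1).
Proof.
  induction n as [| |n IH IHS] using nat_ind2; [simpl; ring | simpl; ring|].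
  rewrite U_SS, IH, IHS, !S_INR. simpl. ring.
Qed.

Lemma Rabs_sin_mul_le n t : Rabs (sin (INR (S n) * t)) <= INR (S n) * Rabs (sin t).
Proof.
  induction n as [|n IH].
  - simpl. rewrite !Rmult_1_l. lra.
  - rewrite (S_INR (S n)), Rmult_plus_distr_r, Rmult_1_l, sin_plus.
    eapply Rle_trans; [apply Rabs_triang|]. rewrite !Rabs_mult.
    assert (Rabs (cos t) <= 1) by (apply Rabs_le, COS_bound).
    assert (Rabs (cos (INR (S n) * t)) <= 1) by (apply Rabs_le, COS_bound).
    pose proof (Rabs_pos (sin t)). pose proof (Rabs_pos (sin (INR (S n) * t))). nra.
Qed.

Lemma Rabs_U_le n y : -1 <= y <= 1 -> Rabs (U n y) <= INR n + 1.
Proof.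
  intros Hy. pose proof (pos_INR n).
  destruct (Req_dec y 1) as [->|Hy1].
  { rewrite U_1, Rabs_right; lra. }
  destruct (Req_dec y (-1)) as [->|Hym1].
  { rewrite U_m1, Rabs_mult, pow_1_abs, Rabs_right; lra. }
  set (t := acos y). assert (Hc : cos t = y) by (apply cos_acos; lra).
  assert (Hs : 0 < Rabs (sin t)).
  { apply Rabs_pos_lt. intros Hs0. pose proof (sin2_cos2 t) as Hpyth.
    rewrite Hs0, Hc in Hpyth. unfold Rsqr in Hpyth.
    assert ((y - 1) * (y + 1) = 0) as Hprod by nra.
    apply Rmult_integral in Hprod. lra. }
  apply Rmult_le_reg_l with (Rabs (sin t)); [exact Hs|].
  rewrite <- Rabs_mult, <- Hc, U_cos_mul_sin.
  eapply Rle_trans; [apply Rabs_sin_mul_le|]. rewrite S_INR. right; ring.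
Qed.

Lemma U_continuous n y : continuous (U n) y.
Proof.
  induction n as [| |n IH IHS] using nat_ind2.
  - apply continuous_const.
  - apply (continuous_ext (fun y => 2 * y)); [reflexivity|]. continuity_R.
  - apply (continuous_ext (fun y => 2 * y * U (S n) y - U n y)); [reflexivity|].
    continuity_R; auto.
Qed.

Inductive poly_deg_le : nat -> (R -> R) -> Prop :=
| poly_deg_le_const c : poly_deg_le 0 (fun _ => c)
| poly_deg_le_mulX d f : poly_deg_le d f -> poly_deg_le (S d) (fun y => y * f y)
| poly_deg_le_add d f g : poly_deg_le d f -> poly_deg_le d g -> poly_deg_le d (fun y => f y + g y)
| poly_deg_le_scal d c f : poly_deg_le d f -> poly_deg_le d (fun y => c * f y)
| poly_deg_le_weaken d d' f : (d <= d')%nat -> poly_deg_le d f -> poly_deg_le d' f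
| poly_deg_le_ext d f g : (forall y, f y = g y) -> poly_deg_le d f -> poly_deg_le d g.

Lemma poly_deg_le_continuous d f : poly_deg_le d f -> forall x, continuous f x.
Proof.
  induction 1; intros x; continuity_R; auto.
  apply (continuous_ext f); auto.
Qed.

Lemma poly_deg_le_mul a f b g :
  poly_deg_le a f -> poly_deg_le b g -> poly_deg_le (a + b) (fun y => f y * g y).
Proof.
  intros Hf Hg. induction Hf as [c|d f _ IH|d f1 f2 _ IH1 _ IH2|d c f _ IH|d d' f Hle _ IH|d f1 f2 Hext _ IH].
  - apply poly_deg_le_scal, Hg.
  - apply (poly_deg_le_ext _ (fun y => y * (f y * g y))); [intros; ring|]. apply poly_deg_le_mulX, IH.
  - apply (poly_deg_le_ext _ (fun y => f1 y * g y + f2 y * g y)); [intros; ring|].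
    apply poly_deg_le_add; auto.
  - apply (poly_deg_le_ext _ (fun y => c * (f y * g y))); [intros; ring|]. apply poly_deg_le_scal, IH.
  - apply (poly_deg_le_weaken (d + b)); [lia|exact IH].
  - apply (poly_deg_le_ext _ (fun y => f1 y * g y)); [intros; rewrite Hext; reflexivity|exact IH].
Qed.

Lemma U_poly_deg_le n : poly_deg_le n (U n).
Proof.
  induction n as [| |n IH IHS] using nat_ind2.
  - apply (poly_deg_le_const 1).
  - apply (poly_deg_le_ext _ (fun y => y * 2)); [intros; simpl; ring|].
    apply poly_deg_le_mulX, poly_deg_le_const.
  - apply (poly_deg_le_ext _ (fun y => y * (2 * U (S n) y) + (-1) * U n y)); [intros; rewrite U_SS; ring|].
    apply poly_deg_le_add; [apply poly_deg_le_mulX, poly_deg_le_scal, IHS|].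
    apply poly_deg_le_scal, (poly_deg_le_weaken n); auto.
Qed.

Lemma is_RInt_cos_mul r a b : r <> 0 ->
  is_RInt (fun t => cos (r * t)) a b ((sin (r * b) - sin (r * a)) / r).
Proof.
  intros Hr.
  replace ((sin (r * b) - sin (r * a)) / r) with
    (minus ((fun t => sin (r * t) / r) b) ((fun t => sin (r * t) / r) a))
    by (unfold minus, plus, opp; simpl; field; exact Hr).
  apply (is_RInt_derive (V := R_CompleteNormedModule) (fun t => sin (r * t) / r)).
  - intros x _. auto_derive; auto. field. exact Hr.
  - intros x _. continuity_R.
Qed.

(* In the variable [y = cos t], [cheb_moment N f] is [\int_{-1}^1 U_N f sqrt (1 - y^2)]. *)
Definition cheb_moment (N : nat) (f : R -> R) : R :=
  RInt (fun t => sin (INR (S N) * t) * sin t * f (cos t)) 0 PI.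

Lemma ex_RInt_cheb_moment N f : (forall x, continuous f x) ->
  ex_RInt (fun t => sin (INR (S N) * t) * sin t * f (cos t)) 0 PI.
Proof. intros Hf. apply ex_RInt_continuous_R. intros x. continuity_R. apply Hf. Qed.

Lemma cheb_moment_const N c : (1 <= N)%nat -> cheb_moment N (fun _ => c) = 0.
Proof.
  intros HN. unfold cheb_moment.
  assert (Hcos : forall k : nat, (1 <= k)%nat -> RInt (fun t => cos (INR k * t)) 0 PI = 0).
  { intros k Hk. apply is_RInt_unique. replace 0 with ((sin (INR k * PI) - sin (INR k * 0)) / INR k) at 2.
    - apply is_RInt_cos_mul, not_0_INR. lia.
    - rewrite Rmult_0_r, sin_0, sin_eq_0_1; [field; apply not_0_INR; lia|].
      exists (Z.of_nat k). rewrite <- INR_IZR_INZ. reflexivity. }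
  assert (Hex : forall k : nat, ex_RInt (fun t => cos (INR k * t)) 0 PI)
    by (intros k; apply ex_RInt_continuous_R; intros; continuity_R).
  rewrite (RInt_ext_R _ (fun t => (c / 2) * (cos (INR N * t) - cos (INR (S (S N)) * t)))).
  2:{ intros t _. rewrite !S_INR.
      replace (INR N * t) with ((INR N + 1) * t - t) by ring.
      replace ((INR N + 1 + 1) * t) with ((INR N + 1) * t + t) by ring.
      rewrite cos_minus, cos_plus. field. }
  rewrite (RInt_scal (fun t => cos (INR N * t) - cos (INR (S (S N)) * t)))
    by (apply (ex_RInt_minus (V := R_NormedModule)); apply Hex).
  rewrite (RInt_minus (fun t => cos (INR N * t))) by apply Hex.
  rewrite !Hcos by lia. unfold scal, minus, plus, opp; simpl; unfold mult; simpl. ring.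
Qed.

Lemma cheb_moment_orthogonal d f : poly_deg_le d f -> forall N, (d < N)%nat -> cheb_moment N f = 0.
Proof.
  intros Hf. induction Hf as [c|d f Hf IH|d f g Hf IH Hg IHg|d c f Hf IH|d d' f Hle _ IH|d f g Hext _ IH];
    intros N HN; unfold cheb_moment.
  - apply cheb_moment_const. lia.
  - destruct N as [|N]; [lia|].
    pose proof (poly_deg_le_continuous _ _ Hf) as Hc.
    rewrite (RInt_ext_R _ (fun t => / 2 * (sin (INR (S (S (S N))) * t) * sin t * f (cos t)
                                   + sin (INR (S N) * t) * sin t * f (cos t)))).
    2:{ intros t _. rewrite !S_INR.
        replace ((INR N + 1 + 1 + 1) * t) with ((INR N + 1 + 1) * t + t) by ring.
        replace ((INR N + 1) * t) with ((INR N + 1 + 1) * t - t) by ring.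
        rewrite sin_plus, sin_minus. field. }
    rewrite (RInt_scal (fun t => _ + _))
      by (apply (ex_RInt_plus (V := R_NormedModule)); apply ex_RInt_cheb_moment; auto).
    rewrite (RInt_plus (fun t => _ * _ * f (cos t))) by (apply ex_RInt_cheb_moment; auto).
    fold (cheb_moment (S (S N)) f) (cheb_moment N f). rewrite !IH by lia.
    unfold scal, plus; simpl; unfold mult; simpl. ring.
  - pose proof (poly_deg_le_continuous _ _ Hf). pose proof (poly_deg_le_continuous _ _ Hg).
    rewrite (RInt_ext_R _ (fun t => sin (INR (S N) * t) * sin t * f (cos t)
                                  + sin (INR (S N) * t) * sin t * g (cos t)))
      by (intros; ring).
    rewrite (RInt_plus (fun t => _ * _ * f (cos t))) by (apply ex_RInt_cheb_moment; auto).
    fold (cheb_moment N f) (cheb_moment N g). rewrite IH, IHg by auto.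
    unfold plus; simpl. ring.
  - pose proof (poly_deg_le_continuous _ _ Hf).
    rewrite (RInt_ext_R _ (fun t => c * (sin (INR (S N) * t) * sin t * f (cos t)))) by (intros; ring).
    rewrite (RInt_scal (fun t => _ * _ * f (cos t))) by (apply ex_RInt_cheb_moment; auto).
    fold (cheb_moment N f). rewrite IH by auto. unfold scal; simpl; unfold mult; simpl. ring.
  - apply IH. lia.
  - rewrite (RInt_ext_R _ (fun t => sin (INR (S N) * t) * sin t * f (cos t)))
      by (intros; rewrite Hext; reflexivity).
    apply IH, HN.
Qed.

Lemma RInt_cos_subst (F : R -> R) : (forall x, continuous F x) ->
  RInt F (-1) 1 = RInt (fun t => sin t * F (cos t)) 0 PI.
Proof.
  intros HF.
  assert (Hex : ex_RInt (fun t => sin t * F (cos t)) 0 PI)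
    by (apply ex_RInt_continuous_R; intros; continuity_R; apply HF).
  rewrite <- cos_PI, <- cos_0, <- (RInt_comp F cos (fun t => - sin t) PI 0).
  - rewrite (RInt_ext_R _ (fun t => - (sin t * F (cos t))))
      by (intros; unfold scal; simpl; unfold mult; simpl; ring).
    rewrite (RInt_opp (V := R_CompleteNormedModule)) by (apply (ex_RInt_swap (V := R_NormedModule)), Hex).
    rewrite <- (opp_RInt_swap (V := R_CompleteNormedModule) _ 0 PI Hex).
    unfold opp; simpl. ring.
  - intros; apply HF.
  - intros x _. split; [apply is_derive_cos|]. continuity_R.
Qed.

Definition Ccoef_integrand (i j k m : nat) (y : R) : R :=
  U i y * U j y * U k y * U m y * sqrt (1 - y ^ 2).

Lemma Ccoef_integrand_continuous i j k m x : continuous (Ccoef_integrand i j k m) x.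
Proof.
  unfold Ccoef_integrand. simpl pow.
  continuity_R; apply U_continuous.
Qed.

Lemma sqrt_1_minus_cos2 t : 0 <= t <= PI -> sqrt (1 - cos t ^ 2) = sin t.
Proof.
  intros Ht. rewrite <- (sqrt_pow2 (sin t)) by (apply sin_ge_0; lra).
  f_equal. pose proof (sin2_cos2 t). unfold Rsqr in *. simpl. lra.
Qed.

Lemma Ccoef_selection n a b c : (a + b + c < n)%nat -> Ccoef n a b c = 0.
Proof.
  intros Hn. unfold Ccoef.
  assert (Hdeg : poly_deg_le (a + b + c) (fun y => U a y * U b y * U c y))
    by (repeat apply poly_deg_le_mul; apply U_poly_deg_le).
  fold (Ccoef_integrand n a b c). rewrite RInt_cos_subst by apply Ccoef_integrand_continuous.
  rewrite (RInt_ext_R _ (fun t => sin (INR (S n) * t) * sin t * (U a (cos t) * U b (cos t) * U c (cos t)))).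
  - fold (cheb_moment n (fun y => U a y * U b y * U c y)).
    rewrite (cheb_moment_orthogonal _ _ Hdeg) by exact Hn. ring.
  - intros t Ht. rewrite Rmin_left, Rmax_right in Ht by (pose proof PI_RGT_0; lra).
    unfold Ccoef_integrand. rewrite <- U_cos_mul_sin, sqrt_1_minus_cos2 by lra. ring.
Qed.

Lemma Ccoef_swap12 i j k m : Ccoef i j k m = Ccoef j i k m.
Proof. unfold Ccoef. f_equal. apply RInt_ext_R. intros; ring. Qed.

Lemma Ccoef_swap23 i j k m : Ccoef i j k m = Ccoef i k j m.
Proof. unfold Ccoef. f_equal. apply RInt_ext_R. intros; ring. Qed.

Lemma Ccoef_swap34 i j k m : Ccoef i j k m = Ccoef i j m k.
Proof. unfold Ccoef. f_equal. apply RInt_ext_R. intros; ring. Qed.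

Lemma Ccoef_abs_le i j k m :
  Rabs (Ccoef i j k m) <= 2 * ((INR i + 1) * (INR j + 1) * (INR k + 1) * (INR m + 1)).
Proof.
  unfold Ccoef. fold (Ccoef_integrand i j k m).
  set (P := (INR i + 1) * (INR j + 1) * (INR k + 1) * (INR m + 1)).
  assert (HP : 0 <= P).
  { pose proof (pos_INR i); pose proof (pos_INR j); pose proof (pos_INR k); pose proof (pos_INR m).
    unfold P; repeat apply Rmult_le_pos; lra. }
  assert (HI : Rabs (RInt (Ccoef_integrand i j k m) (-1) 1) <= (1 - -1) * P).
  { apply abs_RInt_le_const; [lra| |].
    - apply ex_RInt_continuous_R, Ccoef_integrand_continuous.
    - intros t Ht. unfold Ccoef_integrand, P. rewrite !Rabs_mult.
      assert (Hsq : Rabs (sqrt (1 - t ^ 2)) <= 1).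
      { rewrite Rabs_right by apply Rle_ge, sqrt_pos. rewrite <- sqrt_1 at 2.
        apply sqrt_le_1_alt. pose proof (pow2_ge_0 t). lra. }
      pose proof (Rabs_U_le i t Ht); pose proof (Rabs_U_le j t Ht).
      pose proof (Rabs_U_le k t Ht); pose proof (Rabs_U_le m t Ht).
      rewrite <- (Rmult_1_r (_ * _ * _ * (INR m + 1))).
      repeat apply Rmult_le_compat; auto; repeat apply Rmult_le_pos; apply Rabs_pos. }
  pose proof PI2_3_2.
  rewrite Rabs_mult, (Rabs_right (2 / PI)) by (apply Rle_ge, Rdiv_le_0_compat; lra).
  apply Rle_trans with (2 / PI * ((1 - -1) * P)); [apply Rmult_le_compat_l; [apply Rdiv_le_0_compat|]; lra|].
  replace (2 / PI * ((1 - -1) * P)) with ((4 / PI) * P) by (field; lra).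
  apply Rmult_le_compat_r; [exact HP|].
  apply Rle_trans with (4 / 3); [|lra]. apply Rmult_le_compat_l; [lra|]. apply Rinv_le_contravar; lra.
Qed.

Lemma U_pos_near_1 n : exists c, c < 1 /\ forall y, c < y < 1 -> 0 < U n y.
Proof.
  assert (Hc : continuity_pt (U n) 1) by apply continuity_pt_filterlim, U_continuous.
  destruct (Hc 1) as [delta [Hdelta Hclose]]; [lra|].
  exists (1 - delta). split; [lra|]. intros y Hy.
  assert (Hdist : Rabs (U n y - U n 1) < 1).
  { apply Hclose. split; [split; [exact I|lra]|]. simpl; unfold R_dist. rewrite Rabs_left; lra. }
  rewrite U_1 in Hdist. apply Rabs_def2 in Hdist. pose proof (pos_INR n). lra.
Qed.

Lemma Ccoef_diag_pos g : 0 < Ccoef g g g g.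
Proof.
  unfold Ccoef. fold (Ccoef_integrand g g g g). set (F := Ccoef_integrand g g g g).
  destruct (U_pos_near_1 g) as [c0 [Hc0 Hpos]].
  set (c := Rmax c0 0).
  assert (HF : forall x, continuous F x) by apply Ccoef_integrand_continuous.
  assert (HF0 : forall y, 0 <= F y).
  { intros y. unfold F, Ccoef_integrand.
    replace (U g y * U g y * U g y * U g y) with ((U g y * U g y) * (U g y * U g y)) by ring.
    apply Rmult_le_pos; [apply Rmult_le_pos; apply Rle_0_sqr | apply sqrt_pos]. }
  assert (Hleft : 0 <= RInt F (-1) c).
  { apply RInt_ge_0; [unfold c; pose proof (Rmax_r c0 0); lra | apply ex_RInt_continuous_R, HF | auto]. }
  assert (Hright : 0 < RInt F c 1).
  { apply RInt_gt_0; [unfold c; apply Rmax_lub_lt; lra| |auto].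
    intros y Hy. assert (Hy' : c0 < y < 1) by (unfold c in Hy; pose proof (Rmax_l c0 0); lra).
    unfold F, Ccoef_integrand. pose proof (Hpos y Hy').
    assert (0 < sqrt (1 - y ^ 2)) by (apply sqrt_lt_R0; unfold c in Hy; pose proof (Rmax_r c0 0); simpl; nra).
    repeat apply Rmult_lt_0_compat; auto. }
  rewrite <- (RInt_Chasles F (-1) c 1) by (apply ex_RInt_continuous_R, HF).
  pose proof PI_RGT_0. apply Rmult_lt_0_compat; [apply Rdiv_lt_0_compat; lra|].
  unfold plus; simpl. lra.
Qed.

(** * Time averages of products of cosines *)

Definition cos4 (i j k m : nat) (t : R) : R :=
  cos (omega i * t) * cos (omega j * t) * cos (omega k * t) * cos (omega m * t).

Definition cos4_integral (i j k m : nat) : R := RInt (cos4 i j k m) 0 (2 * PI).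

Definition kdelta (n m : nat) : R := if Nat.eqb n m then 1 else 0.

Lemma Rabs_cos4_le i j k m t : Rabs (cos4 i j k m t) <= 1.
Proof.
  assert (Hc : forall x, 0 <= Rabs (cos x) <= 1) by (intros; split; [apply Rabs_pos | apply Rabs_le, COS_bound]).
  assert (Hmul : forall p q, 0 <= p <= 1 -> 0 <= q <= 1 -> 0 <= p * q <= 1) by (intros; split; nra).
  unfold cos4. rewrite !Rabs_mult. repeat apply Hmul; apply Hc.
Qed.

Lemma ex_RInt_cos4 i j k m a b : ex_RInt (cos4 i j k m) a b.
Proof. apply ex_RInt_continuous_R. intros x. unfold cos4. continuity_R. Qed.

Lemma Rabs_cos4_integral_le i j k m : Rabs (cos4_integral i j k m) <= 2 * PI.
Proof.
  pose proof PI_RGT_0. unfold cos4_integral.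
  eapply Rle_trans; [apply (abs_RInt_le_const _ _ _ 1)|]; try lra.
  - apply ex_RInt_cos4.
  - intros; apply Rabs_cos4_le.
Qed.

Lemma cos4_integral_swap12 i j k m : cos4_integral i j k m = cos4_integral j i k m.
Proof. apply RInt_ext_R. intros; unfold cos4; ring. Qed.

Lemma cos4_integral_swap23 i j k m : cos4_integral i j k m = cos4_integral i k j m.
Proof. apply RInt_ext_R. intros; unfold cos4; ring. Qed.

Lemma RInt_cos_int (r : R) (z : Z) : r = IZR z ->
  RInt (fun t => cos (r * t)) 0 (2 * PI) = if Z.eq_dec z 0 then 2 * PI else 0.
Proof.
  intros ->. destruct (Z.eq_dec z 0) as [->|Hz].
  - rewrite (RInt_ext_R _ (fun _ => 1)) by (intros; rewrite Rmult_0_l, cos_0; reflexivity).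
    rewrite (RInt_const (V := R_CompleteNormedModule)). unfold scal; simpl; unfold mult; simpl. ring.
  - assert (Hz' : IZR z <> 0) by (apply not_0_IZR, Hz).
    apply is_RInt_unique.
    replace 0 with ((sin (IZR z * (2 * PI)) - sin (IZR z * 0)) / IZR z) at 2 by
      (rewrite Rmult_0_r, sin_0, sin_eq_0_1; [field; exact Hz'|];
       exists (2 * z)%Z; rewrite mult_IZR; simpl; ring).
    apply is_RInt_cos_mul, Hz'.
Qed.

Lemma cos_mul_cos_sq_mul_cos x y z : cos x * cos y * cos y * cos z =
  / 8 * (cos (x + y + y + z) + cos (x + y + y - z) + 2 * cos (x + z) + 2 * cos (x - z)
         + cos (x - y - y + z) + cos (x - y - y - z)).
Proof.
  assert (Hprod : forall u v, cos u * cos v = (cos (u + v) + cos (u - v)) / 2)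
    by (intros; rewrite cos_plus, cos_minus; field).
  rewrite (Hprod x y).
  replace ((cos (x + y) + cos (x - y)) / 2 * cos y * cos z) with
    ((cos (x + y) * cos y + cos (x - y) * cos y) / 2 * cos z) by field.
  rewrite (Hprod (x + y) y), (Hprod (x - y) y).
  replace (x + y - y) with x by ring. replace (x - y + y) with x by ring.
  replace ((((cos (x + y + y) + cos x) / 2 + (cos x + cos (x - y - y)) / 2) / 2) * cos z) with
    ((cos (x + y + y) * cos z + 2 * (cos x * cos z) + cos (x - y - y) * cos z) / 4) by field.
  rewrite (Hprod (x + y + y) z), (Hprod x z), (Hprod (x - y - y) z). field.
Qed.

Lemma cos4_integral_value n g m : cos4_integral n g g m =
  PI / 4 * (2 * kdelta n m + kdelta (n + m) (2 * g) + kdelta n (m + 2 * g + 2) + kdelta m (n + 2 * g + 2)).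
Proof.
  unfold cos4_integral, cos4. set (b := omega n). set (a := omega g). set (c := omega m).
  rewrite (RInt_ext_R _ (fun t => / 8 * (cos ((b + a + a + c) * t) + cos ((b + a + a - c) * t)
       + 2 * cos ((b + c) * t) + 2 * cos ((b - c) * t) + cos ((b - a - a + c) * t) + cos ((b - a - a - c) * t)))).
  2:{ intros t _. repeat (rewrite Rmult_plus_distr_r || rewrite Rmult_minus_distr_r). apply cos_mul_cos_sq_mul_cos. }
  repeat match goal with
  | |- context [RInt ?F ?lo ?hi] =>
      lazymatch F with
      | fun t => ?d * @?f t => rewrite (RInt_scal f)
      | fun t => @?f t + @?g t => rewrite (RInt_plus f g)
      end; try (apply ex_RInt_continuous_R; intros; continuity_R)
  end.
  set (zn := Z.of_nat n). set (zg := Z.of_nat g). set (zm := Z.of_nat m).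
  assert (Eb : b = IZR (zn + 1)) by (unfold b, omega, zn; rewrite plus_IZR, <- INR_IZR_INZ; reflexivity).
  assert (Ea : a = IZR (zg + 1)) by (unfold a, omega, zg; rewrite plus_IZR, <- INR_IZR_INZ; reflexivity).
  assert (Ec : c = IZR (zm + 1)) by (unfold c, omega, zm; rewrite plus_IZR, <- INR_IZR_INZ; reflexivity).
  rewrite (RInt_cos_int _ ((zn + 1) + (zg + 1) + (zg + 1) + (zm + 1))),
    (RInt_cos_int _ ((zn + 1) + (zg + 1) + (zg + 1) - (zm + 1))),
    (RInt_cos_int _ ((zn + 1) + (zm + 1))), (RInt_cos_int _ ((zn + 1) - (zm + 1))),
    (RInt_cos_int _ ((zn + 1) - (zg + 1) - (zg + 1) + (zm + 1))),
    (RInt_cos_int _ ((zn + 1) - (zg + 1) - (zg + 1) - (zm + 1)))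
    by (rewrite Eb, ?Ea, Ec, ?plus_IZR, ?minus_IZR, ?plus_IZR; ring).
  unfold zn, zg, zm, kdelta, scal, plus; simpl; unfold mult; simpl.
  repeat match goal with |- context [Z.eq_dec ?z 0] => destruct (Z.eq_dec z 0) end;
  repeat match goal with |- context [Nat.eqb ?x ?y] => destruct (Nat.eqb_spec x y) end;
  try lia; field.
Qed.

Lemma Series_abs_le (a M : nat -> R) :
  (forall n, Rabs (a n) <= M n) -> ex_series M -> Rabs (Series a) <= Series M.
Proof.
  intros Ha HM.
  assert (Habs : ex_series (fun n => Rabs (a n)))
    by (apply (ex_series_le (V := R_CompleteNormedModule) _ M);
        [intros n; rewrite Rabs_Rabsolu; apply Ha | exact HM]).
  eapply Rle_trans; [apply Series_Rabs, Habs|].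
  apply Series_le; [intros n; split; [apply Rabs_pos | apply Ha] | exact HM].
Qed.

Lemma Series_tail_abs_le (a M : nat -> R) N :
  (forall n, Rabs (a n) <= M n) -> ex_series M ->
  Rabs (Series a - sum_n a N) <= Series M - sum_n M N.
Proof.
  intros Ha HM.
  assert (Hex : ex_series a) by (apply (ex_series_le (V := R_CompleteNormedModule) a M); auto).
  assert (Htail : forall b, ex_series b -> Series b - sum_n b N = Series (fun k => b (S N + k)%nat)).
  { intros b Hb. rewrite (Series_incr_n b (S N)) by (auto; lia). simpl pred. rewrite sum_n_Reals. ring. }
  rewrite !Htail by auto. apply Series_abs_le; [auto|].
  apply (ex_series_incr_n M (S N)), HM.
Qed.

Lemma Series_tail_small (M : nat -> R) : ex_series M ->
  forall eps, 0 < eps -> exists N0, forall N, (N0 <= N)%nat -> Series M - sum_n M N < eps.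
Proof.
  intros HM eps Heps.
  destruct (Series_correct M HM (ball (Series M) eps)) as [N0 HN0]; [exists (mkposreal eps Heps); auto|].
  exists N0. intros N HN. specialize (HN0 N HN).
  apply (Rabs_def2 (sum_n M N - Series M)) in HN0. lra.
Qed.

Lemma is_RInt_sum_n (f : nat -> R -> R) (I : nat -> R) a b N :
  (forall n, is_RInt (f n) a b (I n)) -> is_RInt (fun t => sum_n (fun n => f n t) N) a b (sum_n I N).
Proof.
  intros Hf. induction N as [|N IH].
  - rewrite sum_O. apply (is_RInt_ext (f 0%nat)); [intros; rewrite sum_O; reflexivity | apply Hf].
  - rewrite sum_Sn. apply (is_RInt_ext (fun t => plus (sum_n (fun n => f n t) N) (f (S N) t))).
    + intros; rewrite sum_Sn; reflexivity.
    + apply (is_RInt_plus (V := R_CompleteNormedModule)); auto.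
Qed.

Lemma is_RInt_Series (f : nat -> R -> R) (M I : nat -> R) a b :
  (forall n, is_RInt (f n) a b (I n)) ->
  (forall n t, Rabs (f n t) <= M n) -> ex_series M ->
  is_RInt (fun t => Series (fun n => f n t)) a b (Series I).
Proof.
  intros HI HB HM.
  assert (Hunif : filterlim (fun N t => sum_n (fun n => f n t) N) eventually
             (locally (T := fct_UniformSpace R R_UniformSpace) (fun t => Series (fun n => f n t)))).
  { intros P [eps HP]. destruct (Series_tail_small M HM eps (cond_pos eps)) as [N0 HN0].
    exists N0. intros N HN. apply HP. intros t.
    pose proof (Series_tail_abs_le (fun n => f n t) M N (fun n => HB n t) HM) as Htail.
    specialize (HN0 N HN).
    change (Rabs (sum_n (fun n => f n t) N - Series (fun n => f n t)) < eps).
    rewrite Rabs_minus_sym. lra. }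
  destruct (filterlim_RInt (V := R_CompleteNormedModule) _ a b eventually eventually_filter _
     (fun N => sum_n I N) (fun N => is_RInt_sum_n f I a b N HI) Hunif) as [If [Hlim HIf]].
  replace (Series I) with If; [exact HIf|].
  symmetry. apply is_series_unique, Hlim.
Qed.

Lemma sum_n_single (f : nat -> R) p N : (forall k, k <> p -> f k = 0) ->
  sum_n f N = if Nat.leb p N then f p else 0.
Proof.
  intros Hf. induction N as [|N IH].
  - rewrite sum_O. destruct p; simpl; [reflexivity|]. apply Hf. lia.
  - rewrite sum_Sn, IH. unfold plus; simpl.
    destruct (Nat.leb_spec p N), (Nat.leb_spec p (S N)); try lia.
    + rewrite (Hf (S N)) by lia. ring.
    + replace p with (S N) by lia. ring.
    + rewrite (Hf (S N)) by lia. ring.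
Qed.

Lemma is_series_single (f : nat -> R) p : (forall k, k <> p -> f k = 0) -> is_series f (f p).
Proof.
  intros Hf P [eps HP]. exists p. intros N HN.
  change (P (@sum_n R_AbelianMonoid f N)). rewrite (sum_n_single f p N Hf).
  destruct (Nat.leb_spec p N); [|lia]. apply HP, ball_center.
Qed.

Lemma Series_single (f : nat -> R) p : (forall k, k <> p -> f k = 0) -> Series f = f p.
Proof. intros Hf. apply is_series_unique, is_series_single, Hf. Qed.

Lemma ex_series_single (f : nat -> R) p : (forall k, k <> p -> f k = 0) -> ex_series f.
Proof. intros Hf. exists (f p). apply is_series_single, Hf. Qed.

Lemma is_series_two (f : nat -> R) p q : p <> q ->
  (forall n, n <> p -> n <> q -> f n = 0) -> is_series f (f p + f q).
Proof.
  intros Hpq Hf.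
  set (fp := fun n => if Nat.eqb n p then f p else 0).
  set (fq := fun n => if Nat.eqb n q then f q else 0).
  assert (Hsingle : forall r k, k <> r -> (if Nat.eqb k r then f r else 0) = 0)
    by (intros r k Hk; apply Nat.eqb_neq in Hk; rewrite Hk; reflexivity).
  assert (Hsplit : forall n, fp n + fq n = f n).
  { intros n. unfold fp, fq.
    destruct (Nat.eqb_spec n p), (Nat.eqb_spec n q); subst; try lia; try ring.
    rewrite (Hf n) by auto. ring. }
  apply (is_series_ext (fun n => fp n + fq n)); [exact Hsplit|].
  replace (f p) with (fp p) by (unfold fp; rewrite Nat.eqb_refl; reflexivity).
  replace (f q) with (fq q) by (unfold fq; rewrite Nat.eqb_refl; reflexivity).
  apply (is_series_plus (V := R_NormedModule)); apply is_series_single; intros; apply Hsingle; auto.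
Qed.

Lemma Series_two (f : nat -> R) p q : p <> q ->
  (forall n, n <> p -> n <> q -> f n = 0) -> Series f = f p + f q.
Proof. intros Hpq Hf. apply is_series_unique, is_series_two; auto. Qed.

Lemma ex_series_two (f : nat -> R) p q : (forall n, n <> p -> n <> q -> f n = 0) -> ex_series f.
Proof.
  intros Hf. destruct (Nat.eq_dec p q) as [<-|Hpq].
  - apply (ex_series_single _ p). intros k Hk. apply Hf; auto.
  - exists (f p + f q). apply is_series_two; auto.
Qed.

Definition Series3 (F : nat -> nat -> nat -> R) : R :=
  Series (fun i => Series (fun j => Series (fun k => F i j k))).

Definition tri_dominated (B : nat -> R) (F : nat -> nat -> nat -> R) : Prop :=
  exists c, 0 <= c /\ forall i j k, Rabs (F i j k) <= c * B i * B j * B k.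

Section TriDominated.

Variable B : nat -> R.
Hypothesis B_ge0 : forall n, 0 <= B n.
Hypothesis B_summable : ex_series B.

Lemma ex_series_scal_B c : ex_series (fun n => c * B n).
Proof. apply (ex_series_scal_l (V := R_NormedModule) c B), B_summable. Qed.

Lemma tri_dominated_ex_series F : tri_dominated B F ->
  (forall i j, ex_series (F i j)) /\
  (forall i, ex_series (fun j => Series (F i j))) /\
  ex_series (fun i => Series (fun j => Series (F i j))).
Proof.
  intros [c [Hc HF]].
  assert (Hin : forall i j, Rabs (Series (F i j)) <= (c * B i * Series B) * B j).
  { intros i j. replace ((c * B i * Series B) * B j) with ((c * B i * B j) * Series B) by ring.
    rewrite <- Series_scal_l. apply Series_abs_le; [intros k; apply HF | apply ex_series_scal_B]. }
  assert (Hmid : forall i, Rabs (Series (fun j => Series (F i j))) <= (c * Series B * Series B) * B i).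
  { intros i. replace ((c * Series B * Series B) * B i) with ((c * B i * Series B) * Series B) by ring.
    rewrite <- Series_scal_l. apply Series_abs_le; [apply Hin | apply ex_series_scal_B]. }
  split; [|split].
  - intros i j. apply (ex_series_le (V := R_CompleteNormedModule) _ (fun k => (c * B i * B j) * B k));
      [apply HF | apply ex_series_scal_B].
  - intros i. apply (ex_series_le (V := R_CompleteNormedModule) _ _ (Hin i)), ex_series_scal_B.
  - apply (ex_series_le (V := R_CompleteNormedModule) _ _ Hmid), ex_series_scal_B.
Qed.

Lemma tri_dominated_plus F G :
  tri_dominated B F -> tri_dominated B G -> tri_dominated B (fun i j k => F i j k + G i j k).
Proof.
  intros [c1 [Hc1 H1]] [c2 [Hc2 H2]]. exists (c1 + c2). split; [lra|].
  intros i j k. eapply Rle_trans; [apply Rabs_triang|].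
  specialize (H1 i j k). specialize (H2 i j k).
  assert (0 <= B i * B j * B k) by (repeat apply Rmult_le_pos; auto). nra.
Qed.

Lemma tri_dominated_scal c F : tri_dominated B F -> tri_dominated B (fun i j k => c * F i j k).
Proof.
  intros [c1 [Hc1 H1]]. exists (Rabs c * c1). split; [apply Rmult_le_pos; [apply Rabs_pos | exact Hc1]|].
  intros i j k. rewrite Rabs_mult, !Rmult_assoc. apply Rmult_le_compat_l; [apply Rabs_pos|].
  rewrite <- !Rmult_assoc. apply H1.
Qed.

Lemma Series3_plus F G : tri_dominated B F -> tri_dominated B G ->
  Series3 (fun i j k => F i j k + G i j k) = Series3 F + Series3 G.
Proof.
  intros HF HG.
  destruct (tri_dominated_ex_series F HF) as [F1 [F2 F3]].
  destruct (tri_dominated_ex_series G HG) as [G1 [G2 G3]].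
  unfold Series3. rewrite <- Series_plus by auto. apply Series_ext. intros i.
  rewrite <- Series_plus by auto. apply Series_ext. intros j.
  apply Series_plus; auto.
Qed.

End TriDominated.

Lemma Series3_scal c F : Series3 (fun i j k => c * F i j k) = c * Series3 F.
Proof.
  unfold Series3. rewrite <- Series_scal_l. apply Series_ext. intros i.
  rewrite <- Series_scal_l. apply Series_ext. intros j. apply Series_scal_l.
Qed.

Lemma Series3_ext F G : (forall i j k, F i j k = G i j k) -> Series3 F = Series3 G.
Proof.
  intros H. unfold Series3.
  apply Series_ext; intros i. apply Series_ext; intros j. apply Series_ext; intros k. apply H.
Qed.

Lemma ex_series_inv_sq : ex_series (fun n => / (INR n + 1) ^ 2).
Proof.
  assert (Htele : is_series (fun n => / (INR n + 1) - / (INR n + 2)) 1).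
  { assert (Hlim : is_lim_seq (fun N => 1 - / (INR N + 2)) 1).
    { replace (Finite 1) with (Rbar_minus 1 0) by (simpl; f_equal; ring).
      apply is_lim_seq_minus'; [apply is_lim_seq_const|].
      replace (Finite 0) with (Rbar_inv p_infty) by reflexivity.
      apply is_lim_seq_inv; [|discriminate].
      apply (is_lim_seq_plus _ _ p_infty 2); [apply is_lim_seq_INR | apply is_lim_seq_const | easy]. }
    apply (filterlim_ext (fun N => 1 - / (INR N + 2))); [|exact Hlim].
    intros N. rewrite sum_n_Reals. induction N as [|N IH]; cbn [sum_f_R0].
    - simpl. field.
    - rewrite <- IH, S_INR. pose proof (pos_INR N). field. lra. }
  apply (ex_series_le (V := R_CompleteNormedModule) _ (fun n => 2 * (/ (INR n + 1) - / (INR n + 2)))).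
  - intros n. pose proof (pos_INR n). change (norm (/ (INR n + 1) ^ 2)) with (Rabs (/ (INR n + 1) ^ 2)).
    rewrite Rabs_right by (apply Rle_ge; left; apply Rinv_0_lt_compat, pow_lt; lra).
    replace (2 * (/ (INR n + 1) - / (INR n + 2))) with (/ ((INR n + 1) * (INR n + 2) / 2)) by (field; lra).
    apply Rinv_le_contravar; [apply Rmult_lt_0_compat; [nra|lra] | simpl; nra].
  - apply (ex_series_scal_l (V := R_NormedModule) 2). exists 1. exact Htele.
Qed.

(* AM-GM: [(n+1) |u_n| <= ((n+1)^4 u_n^2 + (n+1)^-2) / 2], and [(n+1)^4 <= 16 n^(2r)] once [r >= 2]. *)
Lemma l2s_weighted_summable (r : R) (u : seqR) :
  2 <= r -> l2s r u -> ex_series (fun i => (INR i + 1) * Rabs (u i)).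
Proof.
  intros Hr Hu. apply ex_series_incr_1.
  apply (ex_series_le (V := R_CompleteNormedModule) _
    (fun i => / 2 * (16 * (Rpower (INR (S i)) (2 * r) * u (S i) ^ 2) + / (INR (S i) + 1) ^ 2))).
  - intros i. change (norm ?v) with (Rabs v).
    set (n := INR (S i)). assert (Hn : 1 <= n) by (unfold n; rewrite S_INR; pose proof (pos_INR i); lra).
    set (x := (n + 1) ^ 2 * Rabs (u (S i))). set (y := / (n + 1)).
    rewrite Rabs_right by (apply Rle_ge, Rmult_le_pos; [lra | apply Rabs_pos]).
    replace ((n + 1) * Rabs (u (S i))) with (x * y) by (unfold x, y; field; lra).
    assert (Hx2 : x ^ 2 <= 16 * (Rpower n (2 * r) * u (S i) ^ 2)).
    { assert (H4 : (n + 1) ^ 4 <= 16 * Rpower n (2 * r)).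
      { apply Rle_trans with (16 * Rpower n 4).
        - replace 4 with (INR 4) by (simpl; ring). rewrite Rpower_pow by lra.
          replace (16 * n ^ 4) with ((2 * n) ^ 4) by ring. apply pow_incr. lra.
        - apply Rmult_le_compat_l; [lra|]. apply Rle_Rpower; lra. }
      unfold x. rewrite <- (pow2_abs (u (S i))).
      replace (((n + 1) ^ 2 * Rabs (u (S i))) ^ 2) with ((n + 1) ^ 4 * Rabs (u (S i)) ^ 2) by ring.
      rewrite <- Rmult_assoc. apply Rmult_le_compat_r; [apply pow2_ge_0 | exact H4]. }
    assert (Hy2 : y ^ 2 = / (n + 1) ^ 2) by (unfold y; rewrite pow_inv; reflexivity).
    rewrite <- Hy2. pose proof (pow2_ge_0 (x - y)). nra.
  - apply (ex_series_scal_l (V := R_NormedModule) (/ 2)), (ex_series_plus (V := R_NormedModule)).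
    + apply (ex_series_scal_l (V := R_NormedModule) 16).
      apply (ex_series_incr_1 (fun i => Rpower (INR i) (2 * r) * u i ^ 2)), Hu.
    + apply (ex_series_incr_1 (fun i => / (INR i + 1) ^ 2)), ex_series_inv_sq.
Qed.

(** * The averaged map M and its derivative *)

Lemma is_RInt_Series3 (B : nat -> R) (F : nat -> nat -> nat -> R -> R)
  (I : nat -> nat -> nat -> R) c a b :
  (forall n, 0 <= B n) -> ex_series B ->
  (forall i j k, is_RInt (F i j k) a b (I i j k)) ->
  (forall i j k t, Rabs (F i j k t) <= c * B i * B j * B k) ->
  is_RInt (fun t => Series3 (fun i j k => F i j k t)) a b (Series3 I).
Proof.
  intros HB0 HB HI HF.
  assert (Hin : forall i j t, Rabs (Series (fun k => F i j k t)) <= (c * B i * Series B) * B j).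
  { intros i j t. replace ((c * B i * Series B) * B j) with ((c * B i * B j) * Series B) by ring.
    rewrite <- Series_scal_l. apply Series_abs_le; [intros k; apply HF | apply ex_series_scal_B, HB]. }
  apply (is_RInt_Series _ (fun i => (c * Series B * Series B) * B i)); [| |apply ex_series_scal_B, HB].
  - intros i. apply (is_RInt_Series _ (fun j => (c * B i * Series B) * B j));
      [| intros; apply Hin | apply ex_series_scal_B, HB].
    intros j. apply (is_RInt_Series _ (fun k => (c * B i * B j) * B k));
      [apply HI | apply HF | apply ex_series_scal_B, HB].
  - intros i t. replace ((c * Series B * Series B) * B i) with ((c * B i * Series B) * Series B) by ring.
    rewrite <- Series_scal_l. apply Series_abs_le; [intros; apply Hin | apply ex_series_scal_B, HB].
Qed.

(* The time average of [Phi^t (f (Phi^t v))] has the coefficients [avg_coef] on the monomials [v_i v_j v_k]. *)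
Definition avg_coef (m i j k : nat) : R := - Ccoef i j k m * cos4_integral i j k m.

Definition avg_trilinear (m : nat) (u v z : seqR) : R :=
  Series3 (fun i j k => avg_coef m i j k * (u i * v j * z k)).

Lemma Rabs_avg_coef_le m i j k :
  Rabs (avg_coef m i j k) <= (4 * PI * (INR m + 1)) * (INR i + 1) * (INR j + 1) * (INR k + 1).
Proof.
  unfold avg_coef. rewrite Rabs_mult, Rabs_Ropp.
  pose proof (Ccoef_abs_le i j k m). pose proof (Rabs_cos4_integral_le i j k m).
  apply Rle_trans with (2 * ((INR i + 1) * (INR j + 1) * (INR k + 1) * (INR m + 1)) * (2 * PI)).
  - apply Rmult_le_compat; auto; apply Rabs_pos.
  - right; ring.
Qed.

Lemma Mmap_eq (v : seqR) m : ex_series (fun i => (INR i + 1) * Rabs (v i)) ->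
  Mmap v m = omega m ^ 2 * v m + / (2 * PI) * avg_trilinear m v v v.
Proof.
  intros Hv. set (B := fun i => (INR i + 1) * Rabs (v i)).
  assert (HB0 : forall i, 0 <= B i)
    by (intros i; unfold B; apply Rmult_le_pos; [pose proof (pos_INR i); lra | apply Rabs_pos]).
  unfold Mmap. do 2 f_equal. apply is_RInt_unique.
  apply (is_RInt_ext (fun t => Series3 (fun i j k => (- Ccoef i j k m * (v i * v j * v k)) * cos4 i j k m t))).
  - intros t _. unfold Series3, Phi at 1, fmap.
    rewrite <- Series_opp, <- Series_scal_r. apply Series_ext; intros i.
    rewrite <- Series_opp, <- Series_scal_r. apply Series_ext; intros j.
    rewrite <- Series_opp, <- Series_scal_r. apply Series_ext; intros k.
    unfold cos4, Phi. ring.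
  - apply (is_RInt_Series3 B _ _ (2 * (INR m + 1))); [exact HB0 | exact Hv | |].
    + intros i j k. replace (avg_coef m i j k * (v i * v j * v k))
        with (scal (- Ccoef i j k m * (v i * v j * v k)) (cos4_integral i j k m))
        by (unfold avg_coef, scal; simpl; unfold mult; simpl; ring).
      apply (is_RInt_scal (V := R_CompleteNormedModule)), (RInt_correct (V := R_CompleteNormedModule)).
      apply ex_RInt_cos4.
    + intros i j k t. unfold B.
      pose proof (Ccoef_abs_le i j k m) as HC. pose proof (Rabs_cos4_le i j k m t) as Hcos.
      assert (Hv0 : 0 <= Rabs (v i) * Rabs (v j) * Rabs (v k)) by (repeat apply Rmult_le_pos; apply Rabs_pos).
      rewrite !Rabs_mult, Rabs_Ropp.
      apply Rle_trans with
        (2 * ((INR i + 1) * (INR j + 1) * (INR k + 1) * (INR m + 1)) * (Rabs (v i) * Rabs (v j) * Rabs (v k)) * 1).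
      * apply Rmult_le_compat; [apply Rmult_le_pos; [apply Rabs_pos | exact Hv0] | apply Rabs_pos | | exact Hcos].
        apply Rmult_le_compat_r; [exact Hv0 | exact HC].
      * right; ring.
Qed.

Lemma tri_dominated_avg_coef m (w u v z : seqR) :
  (forall i, Rabs (u i) <= w i) -> (forall i, Rabs (v i) <= w i) -> (forall i, Rabs (z i) <= w i) ->
  tri_dominated (fun i => (INR i + 1) * w i) (fun i j k => avg_coef m i j k * (u i * v j * z k)).
Proof.
  intros Hu Hv Hz. exists (4 * PI * (INR m + 1)).
  split; [pose proof PI_RGT_0; pose proof (pos_INR m); apply Rmult_le_pos; lra|].
  intros i j k. rewrite !Rabs_mult.
  apply Rle_trans with ((4 * PI * (INR m + 1) * (INR i + 1) * (INR j + 1) * (INR k + 1)) * (w i * w j * w k)).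
  - apply Rmult_le_compat; [apply Rabs_pos | repeat apply Rmult_le_pos; apply Rabs_pos | apply Rabs_avg_coef_le |].
    pose proof (Rabs_pos (u i)); pose proof (Rabs_pos (v j)); pose proof (Rabs_pos (z k)).
    apply Rmult_le_compat; [apply Rmult_le_pos; auto | auto | | auto].
    apply Rmult_le_compat; auto.
  - right; ring.
Qed.

Section Line.

Variables (x y : seqR) (m : nat).
Let w := fun i => Rabs (x i) + Rabs (y i).
Hypothesis summable_xy : ex_series (fun i => (INR i + 1) * w i).

Lemma Mmap_line e :
  Mmap (fun n => x n + e * y n) m = omega m ^ 2 * (x m + e * y m) + / (2 * PI) *
    (avg_trilinear m x x x
     + e * (avg_trilinear m y x x + avg_trilinear m x y x + avg_trilinear m x x y)
     + e ^ 2 * (avg_trilinear m y y x + avg_trilinear m y x y + avg_trilinear m x y y)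
     + e ^ 3 * avg_trilinear m y y y).
Proof.
  assert (Hw0 : forall i, 0 <= (INR i + 1) * w i).
  { intros i. pose proof (pos_INR i). pose proof (Rabs_pos (x i)). pose proof (Rabs_pos (y i)).
    unfold w. apply Rmult_le_pos; lra. }
  assert (Hxw : forall i, Rabs (x i) <= w i) by (intros i; unfold w; pose proof (Rabs_pos (y i)); lra).
  assert (Hyw : forall i, Rabs (y i) <= w i) by (intros i; unfold w; pose proof (Rabs_pos (x i)); lra).
  rewrite Mmap_eq.
  2:{ apply (ex_series_le (V := R_CompleteNormedModule) _ (fun i => (1 + Rabs e) * ((INR i + 1) * w i))).
      - intros i. change (norm ?v) with (Rabs v). pose proof (pos_INR i).
        rewrite Rabs_mult, Rabs_Rabsolu, (Rabs_right (INR i + 1)) by lra.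
        replace ((1 + Rabs e) * ((INR i + 1) * w i)) with ((INR i + 1) * ((1 + Rabs e) * w i)) by ring.
        apply Rmult_le_compat_l; [lra|]. eapply Rle_trans; [apply Rabs_triang|]. rewrite Rabs_mult.
        unfold w. pose proof (Rabs_pos e); pose proof (Rabs_pos (x i)); pose proof (Rabs_pos (y i)). nra.
      - apply (ex_series_scal_l (V := R_NormedModule) (1 + Rabs e)), summable_xy. }
  do 2 f_equal. unfold avg_trilinear.
  set (T := fun (u v z : seqR) i j k => avg_coef m i j k * (u i * v j * z k)).
  rewrite (Series3_ext _ (fun i j k => T x x x i j k + e * T y x x i j k + e * T x y x i j k + e * T x x y i j k
      + e ^ 2 * T y y x i j k + e ^ 2 * T y x y i j k + e ^ 2 * T x y y i j k + e ^ 3 * T y y y i j k))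
    by (intros; unfold T; ring).
  repeat rewrite (Series3_plus _ summable_xy)
    by repeat first [ apply tri_dominated_plus; [exact Hw0| |] | apply tri_dominated_scal
                    | apply tri_dominated_avg_coef; first [exact Hxw | exact Hyw]].
  rewrite !Series3_scal. unfold T. ring.
Qed.

Lemma dM_eq : dM x y m = omega m ^ 2 * y m
  + / (2 * PI) * (avg_trilinear m y x x + avg_trilinear m x y x + avg_trilinear m x x y).
Proof.
  unfold dM. rewrite (Derive_ext _ _ _ Mmap_line).
  apply is_derive_unique. auto_derive; [exact I|]. ring.
Qed.

End Line.

Definition point_seq (g : nat) (K : R) : seqR := fun n => if Nat.eqb n g then K else 0.

Lemma point_seq_eq g K : point_seq g K g = K.
Proof. unfold point_seq. rewrite Nat.eqb_refl. reflexivity. Qed.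

Lemma point_seq_ne g K n : n <> g -> point_seq g K n = 0.
Proof. intros Hn. unfold point_seq. apply Nat.eqb_neq in Hn. rewrite Hn. reflexivity. Qed.

Lemma avg_coef_swap12 m i j k : avg_coef m i j k = avg_coef m j i k.
Proof. unfold avg_coef. rewrite Ccoef_swap12, cos4_integral_swap12. reflexivity. Qed.

Lemma avg_coef_swap23 m i j k : avg_coef m i j k = avg_coef m i k j.
Proof. unfold avg_coef. rewrite Ccoef_swap23, cos4_integral_swap23. reflexivity. Qed.

Section PointSeq.

Variables (g : nat) (K : R) (m : nat) (y : seqR).
Let x := point_seq g K.

Lemma Series_mul_point_seq (f : nat -> R) : Series (fun k => f k * x k) = f g * K.
Proof.
  rewrite (Series_single _ g); [unfold x; rewrite point_seq_eq; reflexivity|].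
  intros k Hk. unfold x. rewrite point_seq_ne by exact Hk. ring.
Qed.

Lemma Series_point_seq_mul (f : nat -> R) : Series (fun k => x k * f k) = K * f g.
Proof.
  rewrite (Series_ext _ (fun k => f k * x k)) by (intros; ring).
  rewrite Series_mul_point_seq. ring.
Qed.

Lemma avg_trilinear_point_l : avg_trilinear m y x x = K ^ 2 * Series (fun n => avg_coef m n g g * y n).
Proof.
  unfold avg_trilinear, Series3. rewrite <- Series_scal_l. apply Series_ext. intros i.
  rewrite (Series_ext _ (fun j => (avg_coef m i j g * y i * K) * x j)).
  2:{ intros j. rewrite (Series_ext _ (fun k => (avg_coef m i j k * (y i * x j)) * x k)) by (intros; ring).
      rewrite Series_mul_point_seq. ring. }
  rewrite Series_mul_point_seq. ring.
Qed.

Lemma avg_trilinear_point_m : avg_trilinear m x y x = K ^ 2 * Series (fun n => avg_coef m n g g * y n).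
Proof.
  unfold avg_trilinear, Series3.
  rewrite (Series_ext _ (fun i => x i * Series (fun j => K * avg_coef m i j g * y j))).
  2:{ intros i. rewrite <- Series_scal_l. apply Series_ext. intros j.
      rewrite (Series_ext _ (fun k => (avg_coef m i j k * (x i * y j)) * x k)) by (intros; ring).
      rewrite Series_mul_point_seq. ring. }
  rewrite Series_point_seq_mul, <- !Series_scal_l. apply Series_ext. intros n.
  rewrite (avg_coef_swap12 m g n g). ring.
Qed.

Lemma avg_trilinear_point_r : avg_trilinear m x x y = K ^ 2 * Series (fun n => avg_coef m n g g * y n).
Proof.
  unfold avg_trilinear, Series3.
  rewrite (Series_ext _ (fun i => x i * Series (fun j => x j * Series (fun k => avg_coef m i j k * y k)))).
  2:{ intros i. rewrite <- Series_scal_l. apply Series_ext. intros j.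
      rewrite <- Series_scal_l, <- Series_scal_l. apply Series_ext. intros k. ring. }
  rewrite Series_point_seq_mul, Series_point_seq_mul, <- !Series_scal_l. apply Series_ext. intros n.
  rewrite (avg_coef_swap23 m g g n), (avg_coef_swap12 m g n g). ring.
Qed.

End PointSeq.

Lemma avg_coef_value m g n :
  avg_coef m n g g = - (PI / 4) * Ccoef n g g m * (2 * kdelta n m + kdelta (n + m) (2 * g)).
Proof.
  assert (Hsym : Ccoef n g g m = Ccoef m g g n)
    by (rewrite Ccoef_swap34, Ccoef_swap23, Ccoef_swap12, Ccoef_swap23, Ccoef_swap34; reflexivity).
  unfold avg_coef. rewrite cos4_integral_value. unfold kdelta at 3 4.
  destruct (Nat.eqb_spec n (m + 2 * g + 2)).
  { rewrite (Ccoef_selection n g g m) by lia. ring. }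
  destruct (Nat.eqb_spec m (n + 2 * g + 2)).
  { rewrite Hsym, (Ccoef_selection m g g n) by lia. ring. }
  ring.
Qed.

(* Only [n = m] and its mirror image [n = 2g - m] survive the selection rule. *)
Lemma Series_avg_coef_mirror m g (u : seqR) : Series (fun n => avg_coef m n g g * u n) =
  - (PI / 4) * (2 * Ccoef m g g m * u m
                + (if Nat.leb m (2 * g) then Ccoef (2 * g - m) g g m * u (2 * g - m)%nat else 0)).
Proof.
  assert (Hoff : forall k, k <> m -> (k + m <> 2 * g)%nat -> avg_coef m k g g * u k = 0).
  { intros k Hk Hk'. rewrite avg_coef_value. unfold kdelta.
    destruct (Nat.eqb_spec k m), (Nat.eqb_spec (k + m) (2 * g)); try lia. ring. }
  destruct (Nat.leb_spec m (2 * g)).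
  - destruct (Nat.eq_dec m g) as [->|Hmg].
    + rewrite (Series_single _ g) by (intros k Hk; apply Hoff; lia).
      rewrite avg_coef_value. replace (2 * g - g)%nat with g by lia. unfold kdelta.
      rewrite Nat.eqb_refl. destruct (Nat.eqb_spec (g + g) (2 * g)); [|lia]. ring.
    + rewrite (Series_two _ m (2 * g - m)) by (lia || (intros k H1 H2; apply Hoff; lia)).
      rewrite !avg_coef_value. unfold kdelta. rewrite Nat.eqb_refl.
      destruct (Nat.eqb_spec (m + m) (2 * g)), (Nat.eqb_spec (2 * g - m) m),
        (Nat.eqb_spec (2 * g - m + m) (2 * g)); try lia. ring.
  - rewrite (Series_single _ m) by (intros k Hk; apply Hoff; lia).
    rewrite avg_coef_value. unfold kdelta. rewrite Nat.eqb_refl.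
    destruct (Nat.eqb_spec (m + m) (2 * g)); [lia|]. ring.
Qed.

Lemma dM_point_seq g K (u : seqR) m : ex_series (fun i => (INR i + 1) * Rabs (u i)) ->
  dM (point_seq g K) u m = omega m ^ 2 * u m - 3 * K ^ 2 / 8 *
    (2 * Ccoef m g g m * u m + (if Nat.leb m (2 * g) then Ccoef (2 * g - m) g g m * u (2 * g - m)%nat else 0)).
Proof.
  intros Hu. rewrite dM_eq.
  - rewrite avg_trilinear_point_l, avg_trilinear_point_m, avg_trilinear_point_r, Series_avg_coef_mirror.
    pose proof PI_RGT_0. field. lra.
  - apply (ex_series_ext (fun i => (INR i + 1) * Rabs (point_seq g K i) + (INR i + 1) * Rabs (u i)));
      [intros i; symmetry; apply Rmult_plus_distr_l|].
    apply (ex_series_plus (V := R_NormedModule)); [|exact Hu].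
    apply (ex_series_single _ g). intros k Hk. rewrite point_seq_ne, Rabs_R0 by exact Hk. ring.
Qed.

(** * Kernels of mirror operators *)

Lemma sym2x2_kernel_trivial a b c x y :
  a * b - c ^ 2 <> 0 -> a * x - c * y = 0 -> b * y - c * x = 0 -> x = 0 /\ y = 0.
Proof.
  intros Hdet H1 H2.
  split; apply (Rmult_eq_reg_l (a * b - c ^ 2)); auto.
  - replace ((a * b - c ^ 2) * x) with (b * (a * x - c * y) + c * (b * y - c * x)) by ring.
    rewrite H1, H2. ring.
  - replace ((a * b - c ^ 2) * y) with (c * (a * x - c * y) + a * (b * y - c * x)) by ring.
    rewrite H1, H2. ring.
Qed.

Lemma sym2x2_singular_kernel a b c : a * b - c ^ 2 = 0 ->
  exists x y, (x <> 0 \/ y <> 0) /\ a * x - c * y = 0 /\ b * y - c * x = 0.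
Proof.
  intros Hdet. destruct (Req_dec a 0) as [Ha|Ha]; [destruct (Req_dec c 0) as [Hc|Hc]|].
  - exists 1, 0. subst. repeat split; [left; lra | ring | ring].
  - exists c, a. repeat split; [left; exact Hc | ring |]. rewrite <- Hdet. ring.
  - exists c, a. repeat split; [right; exact Ha | ring |]. rewrite <- Hdet. ring.
Qed.

Definition pair_seq (p q : nat) (a b : R) : seqR :=
  fun k => if Nat.eqb k p then a else if Nat.eqb k q then b else 0.

Lemma pair_seq_off p q a b k : k <> p -> k <> q -> pair_seq p q a b k = 0.
Proof. intros Hp Hq. unfold pair_seq. apply Nat.eqb_neq in Hp, Hq. rewrite Hp, Hq. reflexivity. Qed.

Lemma pair_seq_fst p q a b : pair_seq p q a b p = a.
Proof. unfold pair_seq. rewrite Nat.eqb_refl. reflexivity. Qed.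

Lemma pair_seq_snd p q a b : p <> q -> pair_seq p q a b q = b.
Proof.
  intros Hpq. unfold pair_seq. apply not_eq_sym, Nat.eqb_neq in Hpq. rewrite Hpq, Nat.eqb_refl. reflexivity.
Qed.

Definition mirror_op (g : nat) (d c : nat -> R) (u : seqR) (m : nat) : R :=
  d m * u m - (if Nat.leb m (2 * g) then c m * u (2 * g - m)%nat else 0).

Section MirrorOperator.

Variables (g : nat) (d c : nat -> R) (P : seqR -> Prop).
Hypothesis c_mirror : forall n, (n <= 2 * g)%nat -> c (2 * g - n)%nat = c n.
Hypothesis center_nondeg : d g - c g <> 0.
Hypothesis P_pair_seq : forall p q a b, P (pair_seq p q a b).

Let L := mirror_op g d c.

Lemma mirror_op_outer u m : (2 * g < m)%nat -> L u m = d m * u m.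
Proof. intros Hm. unfold L, mirror_op. destruct (Nat.leb_spec m (2 * g)); [lia|]. ring. Qed.

Lemma mirror_op_center u : L u g = (d g - c g) * u g.
Proof.
  unfold L, mirror_op. destruct (Nat.leb_spec g (2 * g)); [|lia].
  replace (2 * g - g)%nat with g by lia. ring.
Qed.

Lemma mirror_op_low u n : (n <= 2 * g)%nat -> L u n = d n * u n - c n * u (2 * g - n)%nat.
Proof. intros Hn. unfold L, mirror_op. destruct (Nat.leb_spec n (2 * g)); [reflexivity|lia]. Qed.

Lemma mirror_op_high u n : (n <= 2 * g)%nat ->
  L u (2 * g - n)%nat = d (2 * g - n)%nat * u (2 * g - n)%nat - c n * u n.
Proof.
  intros Hn. rewrite mirror_op_low by lia. rewrite c_mirror by lia.
  replace (2 * g - (2 * g - n))%nat with n by lia. reflexivity.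
Qed.

Lemma mirror_op_kernel_trivial :
  (forall m, (2 * g + 1 <= m)%nat -> d m <> 0) ->
  (forall n, (n < g)%nat -> d n * d (2 * g - n)%nat - c n ^ 2 <> 0) ->
  forall u, (forall m, L u m = 0) -> forall m, u m = 0.
Proof.
  intros Houter Hpair u Hu.
  assert (Hlow : forall n, (n < g)%nat -> u n = 0 /\ u (2 * g - n)%nat = 0).
  { intros n Hn. apply (sym2x2_kernel_trivial (d n) (d (2 * g - n)%nat) (c n)); [apply Hpair, Hn| |].
    - rewrite <- mirror_op_low by lia. apply Hu.
    - rewrite <- mirror_op_high by lia. apply Hu. }
  intros m. destruct (Nat.lt_ge_cases (2 * g) m) as [Hm|Hm]; [|destruct (Nat.lt_total m g) as [Hmg|[->|Hmg]]].
  - apply (Rmult_eq_reg_l (d m)); [|apply Houter; lia].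
    rewrite <- mirror_op_outer by exact Hm. rewrite Hu. ring.
  - apply Hlow, Hmg.
  - apply (Rmult_eq_reg_l (d g - c g)); [|exact center_nondeg].
    rewrite <- mirror_op_center, Hu. ring.
  - replace m with (2 * g - (2 * g - m))%nat by lia. apply Hlow. lia.
Qed.

Lemma mirror_op_outer_kernel m : (2 * g < m)%nat -> d m = 0 ->
  forall k, L (pair_seq m m 1 0) k = 0.
Proof.
  intros Hm Hd k. destruct (Nat.eq_dec k m) as [->|Hk].
  - rewrite mirror_op_outer, Hd by exact Hm. ring.
  - unfold L, mirror_op. rewrite pair_seq_off by exact Hk.
    destruct (Nat.leb_spec k (2 * g)); [|ring]. rewrite pair_seq_off by lia. ring.
Qed.

Lemma mirror_op_pair_kernel n x y : (n < g)%nat ->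
  d n * x - c n * y = 0 -> d (2 * g - n)%nat * y - c n * x = 0 ->
  forall k, L (pair_seq n (2 * g - n) x y) k = 0.
Proof.
  intros Hn H1 H2 k.
  assert (Hfst := pair_seq_fst n (2 * g - n) x y).
  assert (Hsnd : pair_seq n (2 * g - n) x y (2 * g - n)%nat = y) by (apply pair_seq_snd; lia).
  destruct (Nat.eq_dec k n) as [->|Hkn]; [|destruct (Nat.eq_dec k (2 * g - n)) as [->|Hkn']].
  - rewrite mirror_op_low, Hfst, Hsnd by lia. exact H1.
  - rewrite mirror_op_high, Hfst, Hsnd by lia. exact H2.
  - unfold L, mirror_op. rewrite pair_seq_off by assumption.
    destruct (Nat.leb_spec k (2 * g)); [|ring]. rewrite pair_seq_off by lia. ring.
Qed.

Theorem mirror_op_kernel_trivial_iff :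
  (forall u, P u -> (forall m, L u m = 0) -> forall m, u m = 0) <->
  (forall m, (2 * g + 1 <= m)%nat -> d m <> 0) /\
  (forall n, (n < g)%nat -> d n * d (2 * g - n)%nat - c n ^ 2 <> 0).
Proof.
  split.
  - intros Hker. split.
    + intros m Hm Hd.
      assert (Hm' : (2 * g < m)%nat) by lia.
      assert (H := Hker _ (P_pair_seq m m 1 0) (mirror_op_outer_kernel m Hm' Hd) m).
      rewrite pair_seq_fst in H. lra.
    + intros n Hn Hdet.
      destruct (sym2x2_singular_kernel _ _ _ Hdet) as [x [y [Hxy [H1 H2]]]].
      assert (Hz := Hker _ (P_pair_seq n (2 * g - n) x y) (mirror_op_pair_kernel n x y Hn H1 H2)).
      destruct Hxy as [Hx|Hy].
      * apply Hx. rewrite <- (pair_seq_fst n (2 * g - n) x y). apply Hz.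
      * apply Hy. rewrite <- (pair_seq_snd n (2 * g - n) x y) by lia. apply Hz.
  - intros [Houter Hpair] u _. apply mirror_op_kernel_trivial; assumption.
Qed.

End MirrorOperator.

Lemma l2s_pair_seq r p q a b : l2s r (pair_seq p q a b).
Proof.
  apply (ex_series_two _ p q). intros n Hp Hq. rewrite pair_seq_off by assumption. ring.
Qed.

Lemma omega_pos n : 0 < omega n.
Proof. unfold omega. pose proof (pos_INR n). lra. Qed.

Definition diag_coef (g m : nat) : R :=
  omega m ^ 2 * Ccoef g g g g - 2 * omega g ^ 2 * Ccoef g g m m.

Definition mirror_coef (g m : nat) : R := omega g ^ 2 * Ccoef g (2 * g - m) g m.

Lemma mirror_coef_mirror g n : (n <= 2 * g)%nat -> mirror_coef g (2 * g - n) = mirror_coef g n.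
Proof.
  intros Hn. unfold mirror_coef. replace (2 * g - (2 * g - n))%nat with n by lia.
  rewrite (Ccoef_swap23 g n), (Ccoef_swap34 g g), (Ccoef_swap23 g g). reflexivity.
Qed.

Lemma diag_sub_mirror_center g : diag_coef g g - mirror_coef g g <> 0.
Proof.
  unfold diag_coef, mirror_coef. replace (2 * g - g)%nat with g by lia.
  pose proof (Ccoef_diag_pos g). pose proof (omega_pos g).
  assert (0 < omega g ^ 2 * Ccoef g g g g) by (apply Rmult_lt_0_compat; [apply pow_lt|]; lra).
  lra.
Qed.

Lemma dM_point_seq_mirror_op g K u m :
  ex_series (fun i => (INR i + 1) * Rabs (u i)) ->
  3 * K ^ 2 / 8 * Ccoef g g g g = omega g ^ 2 ->
  dM (point_seq g K) u m = mirror_op g (diag_coef g) (mirror_coef g) u m / Ccoef g g g g.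
Proof.
  intros Hu HK. pose proof (Ccoef_diag_pos g).
  rewrite dM_point_seq by exact Hu.
  unfold mirror_op, diag_coef, mirror_coef.
  rewrite (Ccoef_swap12 m g), (Ccoef_swap23 g m), (Ccoef_swap12 (2 * g - m) g).
  rewrite <- HK. destruct (Nat.leb m (2 * g)); field; lra.
Qed.

Lemma K_sq_normalization g K :
  K = 2 * omega g * sqrt (2 / (3 * Ccoef g g g g))
  \/ K = - (2 * omega g * sqrt (2 / (3 * Ccoef g g g g))) ->
  3 * K ^ 2 / 8 * Ccoef g g g g = omega g ^ 2.
Proof.
  intros HK. pose proof (Ccoef_diag_pos g).
  assert (Hsq : sqrt (2 / (3 * Ccoef g g g g)) ^ 2 = 2 / (3 * Ccoef g g g g))
    by (rewrite <- Rsqr_pow2; apply Rsqr_sqrt, Rlt_le, Rdiv_lt_0_compat; lra).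
  assert (HK2 : K ^ 2 = 4 * omega g ^ 2 * (2 / (3 * Ccoef g g g g)))
    by (rewrite <- Hsq; destruct HK as [-> | ->]; ring).
  rewrite HK2. field. lra.
Qed.

Theorem lemma7p1 (gamma : nat) (s : R) (hs : 0 <= s) (K : R)
  (hK : K = 2 * omega gamma * sqrt (2 / (3 * Ccoef gamma gamma gamma gamma))
        \/ K = - (2 * omega gamma * sqrt (2 / (3 * Ccoef gamma gamma gamma gamma)))) :
  let xi : seqR := fun m => if Nat.eqb m gamma then K else 0 in
  (forall eta : seqR, l2s (s + 3) eta ->
      (forall m, dM xi eta m = 0) -> forall m, eta m = 0)
  <->
  ((forall m : nat, (2 * gamma + 1 <= m)%nat ->
      (omega m) ^ 2 * Ccoef gamma gamma gamma gamma
      - 2 * (omega gamma) ^ 2 * Ccoef gamma gamma m m <> 0)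
   /\ (forall n : nat, (n < gamma)%nat -> Dgn gamma n <> 0)).
Proof.
  intros xi. change xi with (point_seq gamma K).
  pose proof (Ccoef_diag_pos gamma) as HC0.
  pose proof (K_sq_normalization gamma K hK) as Hnorm.
  assert (Hzero : forall u, l2s (s + 3) u -> forall m,
             dM (point_seq gamma K) u m = 0 <-> mirror_op gamma (diag_coef gamma) (mirror_coef gamma) u m = 0).
  { intros u Hu m.
    assert (Hw : ex_series (fun i => (INR i + 1) * Rabs (u i)))
      by (apply (l2s_weighted_summable (s + 3)); [lra | exact Hu]).
    rewrite (dM_point_seq_mirror_op _ _ _ _ Hw Hnorm). unfold Rdiv.
    split; intros H.
    - apply (Rmult_eq_reg_r (/ Ccoef gamma gamma gamma gamma)); [rewrite H; ring |].
      apply Rinv_neq_0_compat. lra.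
    - rewrite H. ring. }
  transitivity (forall u, l2s (s + 3) u ->
      (forall m, mirror_op gamma (diag_coef gamma) (mirror_coef gamma) u m = 0) -> forall m, u m = 0).
  - split; intros Hker u Hu Hz; apply (Hker u Hu); intros m; apply (Hzero u Hu m), Hz.
  (* [Dgn gamma n] unfolds to [diag_coef gamma n * diag_coef gamma (2 gamma - n) - mirror_coef gamma n ^ 2]. *)
  - exact (mirror_op_kernel_trivial_iff gamma _ _ (l2s (s + 3)) (mirror_coef_mirror gamma)
             (diag_sub_mirror_center gamma) (l2s_pair_seq (s + 3))).
Qed.
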